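(* Let $K$ be a commutative ring with identity, let $B$ be a monoid and $n\ge 0$. If $B$ is weak bi-$FP_n$ over $K$, then $B$ is both left-$FP_n$ and right-$FP_n$ over $K$.
   Context: $KB$ denotes the monoid ring, with augmentation $\varepsilon: KB\to K$, $b\mapsto 1$ for $b\in B$. A left (or right) module $M$ over a ring is of type $FP_n$ if there is an exact sequence $0\leftarrow M\leftarrow P_0\leftarrow P_1\leftarrow\cdots\leftarrow P_n$ with $P_0,\dots,P_n$ finitely generated free modules. $B$ is left-$FP_n$ (resp. right-$FP_n$) if $K$, regarded as a left (resp. right) $KB$-module via $a\cdot k=\varepsilon(a)k$ (resp. $k\cdot a=k\varepsilon(a)$), is of type $FP_n$. A $(KB,KB)$-bimodule is an abelian group with commuting left and right $KB$-actions such that $km=mk$ for $k\in K$; the free $(KB,KB)$-bimodule of rank $1$ is $KB\otimes_K KB$ with action $a(u\otimes v)b=au\otimes vb$, and a free bimodule of rank $r$ is a direct sum of $r$ copies of it. $B$ is weak bi-$FP_n$ if $K$, regarded as a $(KB,KB)$-bimodule via $a\cdot k\cdot a'=\varepsilon(a)k\varepsilon(a')$, admits an exact sequence $0\leftarrow K\leftarrow F_0\leftarrow\cdots\leftarrow F_n$ with $F_0,\dots,F_n$ finitely generated free $(KB,KB)$-bimodules. *)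

From HB Require Import structures.
From mathcomp Require Import all_boot all_algebra.
From mathcomp Require Import finmap.
From mathcomp Require Import monalg.

Set Implicit Arguments.
Unset Strict Implicit.
Unset Printing Implicit Defensive.

Import GRing.Theory.
Local Open Scope fset.
Local Open Scope ring_scope.

Section MonRing.
Variables (B : monoidType) (K : comPzRingType).

Definition monring : predArgType := malg B K.
HB.instance Definition _ := GRing.Zmodule.on monring.

Implicit Types (g : monring).

Definition mrmul g1 g2 : monring :=
  \sum_(k1 <- msupp g1) \sum_(k2 <- msupp g2)
     << g1@_k1 * g2@_k2 *g (k1 * k2)%g >>.

Definition mrone : monring := << 1 *g (1%g : B) >>.

Lemma mrmulw (d1 d2 : {fset B}) g1 g2 :
  msupp g1 `<=` d1 -> msupp g2 `<=` d2 ->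
  mrmul g1 g2 = \sum_(k1 <- d1) \sum_(k2 <- d2)
     << g1@_k1 * g2@_k2 *g (k1 * k2)%g >>.
Proof.
move=> le_d1 le_d2; rewrite /mrmul (big_fset_incl _ le_d1) /=.
  apply/eq_bigr=> k1 _; apply/big_fset_incl => // k _ /mcoeff_outdom ->.
  by rewrite mulr0 monalgU0.
move=> k _ /mcoeff_outdom g1k.
by rewrite big1 => // k' _; rewrite g1k mul0r monalgU0.
Qed.

Lemma mrmulUg c k g :
  mrmul << c *g k >> g = \sum_(k' <- msupp g) << c * g@_k' *g (k * k')%g >>.
Proof.
rewrite (mrmulw msuppU_le (fsubset_refl _)) big_seq_fset1.
by apply/eq_bigr => k' _; rewrite mcoeffUU.
Qed.

Lemma mrmulgU c k g :
  mrmul g << c *g k >> = \sum_(k' <- msupp g) << g@_k' * c *g (k' * k)%g >>.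
Proof.
rewrite (mrmulw (fsubset_refl _) msuppU_le).
by apply/eq_bigr=> k' _; rewrite big_seq_fset1 mcoeffUU.
Qed.

Lemma mrmulUU c1 c2 k1 k2 :
  mrmul << c1 *g k1 >> << c2 *g k2 >> = << c1 * c2 *g (k1 * k2)%g >>.
Proof. by rewrite (mrmulw msuppU_le msuppU_le) !big_seq_fset1 !mcoeffUU. Qed.

Lemma mrmul0g : left_zero 0 mrmul.
Proof. by move=> g; rewrite /mrmul msupp0 big_seq_fset0. Qed.

Lemma mrmulg0 : right_zero 0 mrmul.
Proof. by move=> g; rewrite /mrmul big1 // => k _; rewrite msupp0 big_seq_fset0. Qed.

Lemma mrmulEl1 g1 g2 :
  mrmul g1 g2 = \sum_(k1 <- msupp g1) mrmul << g1@_k1 *g k1 >> g2.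
Proof. by apply/eq_bigr=> k _; rewrite mrmulUg. Qed.

Lemma mrmulEr1 g1 g2 :
  mrmul g1 g2 = \sum_(k2 <- msupp g2) mrmul g1 << g2@_k2 *g k2 >>.
Proof. by rewrite [LHS]/mrmul exchange_big; apply/eq_bigr=> k _; rewrite mrmulgU. Qed.

Lemma mrmul1g : left_id mrone mrmul.
Proof.
move=> g; rewrite /mrone mrmulUg [RHS]monalgE.
by apply/eq_bigr=> kg _; rewrite mul1r mul1g.
Qed.

Lemma mrmulg1 : right_id mrone mrmul.
Proof.
move=> g; rewrite /mrone mrmulgU [RHS]monalgE.
by apply/eq_bigr=> k _; rewrite mulr1 mulg1.
Qed.

Lemma mrmulDl : left_distributive mrmul +%R.
Proof.
move=> g1 g2 g; rewrite [in RHS](mrmulw (fsubsetUl _ (msupp g2)) (fsubset_refl _)).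
rewrite [in RHS](mrmulw (fsubsetUr (msupp g1) _) (fsubset_refl _)).
rewrite (mrmulw (msuppD_le _ _) (fsubset_refl _)).
rewrite -big_split /=; apply/eq_bigr=> k1 _.
rewrite -big_split /=; apply/eq_bigr=> k2 _.
by rewrite mcoeffD mulrDl monalgUD.
Qed.

Lemma mrmulDr : right_distributive mrmul +%R.
Proof.
move=> g g1 g2; rewrite [in RHS](mrmulw (fsubset_refl _) (fsubsetUl _ (msupp g2))).
rewrite [in RHS](mrmulw (fsubset_refl _) (fsubsetUr (msupp g1) _)).
rewrite (mrmulw (fsubset_refl _) (msuppD_le _ _)).
rewrite -big_split /=; apply/eq_bigr=> k1 _.
rewrite -big_split /=; apply/eq_bigr=> k2 _.
by rewrite mcoeffD mulrDr monalgUD.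
Qed.

Lemma mrmulA : associative mrmul.
Proof.
move=> g1 g2 g3.
rewrite [RHS](big_morph (mrmul^~ _) (fun _ _ => mrmulDl _ _ _) (mrmul0g _)).
rewrite mrmulEl1; apply/eq_bigr=> k1 _.
rewrite [LHS](big_morph (mrmul _) (fun _ _ => mrmulDr _ _ _) (mrmulg0 _)).
rewrite [RHS](big_morph (mrmul^~ _) (fun _ _ => mrmulDl _ _ _) (mrmul0g _)).
apply/eq_bigr=> k2 _.
rewrite [LHS](big_morph (mrmul _) (fun _ _ => mrmulDr _ _ _) (mrmulg0 _)).
by rewrite mrmulEr1; apply/eq_bigr=> k3 _; rewrite !mrmulUU mulrA mulgA.
Qed.

HB.instance Definition _ := GRing.Zmodule_isPzRing.Build monring
  mrmulA mrmul1g mrmulg1 mrmulDl mrmulDr.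

End MonRing.

(* Carriers of K viewed as a left / right KB-module (depend on B).     *)
Definition augL_ (B : monoidType) (K : comPzRingType) : Type := K.
Definition augR_ (B : monoidType) (K : comPzRingType) : Type := K.

Section Augmentation.
Variables (B : monoidType) (K : comPzRingType).
Implicit Types (g : monring B K).

Definition aug g : K := \sum_(k <- msupp g) g@_k.

Lemma augw (d : {fset B}) g : msupp g `<=` d -> aug g = \sum_(k <- d) g@_k.
Proof.
by move=> le; rewrite /aug (big_fset_incl _ le) // => k _ /mcoeff_outdom.
Qed.

Lemma aug0 : aug 0 = 0.
Proof. by rewrite /aug msupp0 big_seq_fset0. Qed.

Lemma augD g1 g2 : aug (g1 + g2) = aug g1 + aug g2.
Proof.
rewrite (augw (msuppD_le _ _)) (augw (fsubsetUl _ (msupp g2))).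
rewrite (augw (fsubsetUr (msupp g1) _)) -big_split /=.
by apply/eq_bigr => k _; rewrite mcoeffD.
Qed.

Lemma augU (c : K) (k : B) : aug (<< c *g k >> : monring B K) = c.
Proof. by rewrite (augw msuppU_le) big_seq_fset1 mcoeffUU. Qed.

Lemma aug1 : aug 1 = 1.
Proof. exact: augU. Qed.

Lemma monringME g1 g2 : g1 * g2 = \sum_(k1 <- msupp g1) \sum_(k2 <- msupp g2)
     (<< g1@_k1 * g2@_k2 *g (k1 * k2)%g >> : monring B K).
Proof. by []. Qed.

Lemma augM g1 g2 : aug (g1 * g2) = aug g1 * aug g2.
Proof.
rewrite monringME (big_morph aug augD aug0) [aug g1]/aug [aug g2]/aug big_distrlr /=.
apply/eq_bigr => k1 _; rewrite (big_morph aug augD aug0).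
by apply/eq_bigr => k2 _; rewrite augU.
Qed.

Local Notation augL := (augL_ B K).
HB.instance Definition _ := GRing.Zmodule.on augL.

Definition augL_scale (a : monring B K) (v : augL) : augL := (aug a * v : K).

Lemma augL_scalerA a b v :
  augL_scale a (augL_scale b v) = augL_scale (a * b) v.
Proof. by rewrite /augL_scale augM mulrA. Qed.

Lemma augL_scale1r : left_id 1 augL_scale.
Proof. by move=> v; rewrite /augL_scale aug1 mul1r. Qed.

Lemma augL_scalerDr : right_distributive augL_scale +%R.
Proof. by move=> a u v; rewrite /augL_scale mulrDr. Qed.

Lemma augL_scalerDl v : {morph augL_scale^~ v : a b / a + b}.
Proof. by move=> a b; rewrite /augL_scale augD mulrDl. Qed.

HB.instance Definition _ := GRing.Zmodule_isLmodule.Build (monring B K) augL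
  augL_scalerA augL_scale1r augL_scalerDr augL_scalerDl.

(* K regarded as a right KB-module via  k . a = k eps(a); right
   KB-modules are left modules over the converse ring (KB)^c.          *)
Local Notation augR := (augR_ B K).
HB.instance Definition _ := GRing.Zmodule.on augR.

Definition augR_scale (a : (monring B K)^c) (v : augR) : augR :=
  ((v : K) * aug (a : monring B K) : K).

Lemma augR_scalerA a b v :
  augR_scale a (augR_scale b v) = augR_scale (a * b) v.
Proof.
rewrite /augR_scale [(a * b)%R]/GRing.mul /= augM.
by rewrite -mulrA.
Qed.

Lemma augR_scale1r : left_id 1 augR_scale.
Proof. by move=> v; rewrite /augR_scale aug1 mulr1. Qed.

Lemma augR_scalerDr : right_distributive augR_scale +%R.
Proof. by move=> a u v; rewrite /augR_scale mulrDl. Qed.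

Lemma augR_scalerDl v : {morph augR_scale^~ v : a b / a + b}.
Proof. by move=> a b; rewrite /augR_scale augD mulrDr. Qed.

HB.instance Definition _ := GRing.Zmodule_isLmodule.Build (monring B K)^c augR
  augR_scalerA augR_scale1r augR_scalerDr augR_scalerDl.

End Augmentation.

(* (d i : P_(i+1) -> P_i); the maps d i for i >= n are irrelevant.     *)
Definition exact_resolution (M : zmodType) (P : nat -> zmodType)
    (d0 : P 0%N -> M) (d : forall i : nat, P i.+1 -> P i) (n : nat) : Prop :=
  [/\ forall m : M, exists x, d0 x = m,
      (0 < n)%N -> forall x, d0 x = 0 <-> exists y, d 0%N y = x
    &
      forall i : nat, (i.+1 < n)%N ->
        forall x, d i x = 0 <-> exists y, d i.+1 y = x].

Definition FPn (R : pzRingType) (M : lmodType R) (n : nat) : Prop :=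
  exists (r : nat -> nat) (d0 : {linear 'rV[R]_(r 0%N) -> M})
         (d : forall i : nat, {linear 'rV[R]_(r i.+1) -> 'rV[R]_(r i)}),
    @exact_resolution M (fun i => 'rV[R]_(r i) : zmodType) d0 (fun i => d i) n.

Definition left_FPn (B : monoidType) (K : comPzRingType) (n : nat) : Prop :=
  FPn (augL_ B K) n.
Definition right_FPn (B : monoidType) (K : comPzRingType) (n : nat) : Prop :=
  FPn (augR_ B K) n.

Section Bimodules.
Variables (B : monoidType) (K : comPzRingType).

(* KB (x)_K KB, realised with its K-basis { b (x) b' } = B x B. *)
Definition KBtKB : predArgType := malg (B * B)%type K.
HB.instance Definition _ := GRing.Zmodule.on KBtKB.

(* a (u (x) v) a' = a u (x) v a' *)
Definition KBtKB_lact (a : monring B K) (u : KBtKB) : KBtKB :=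
  \sum_(c <- msupp a) \sum_(p <- msupp u)
     << a@_c * u@_p *g ((c * p.1)%g, p.2) >>.
Definition KBtKB_ract (u : KBtKB) (a : monring B K) : KBtKB :=
  \sum_(p <- msupp u) \sum_(c <- msupp a)
     << u@_p * a@_c *g (p.1, (p.2 * c)%g) >>.

Definition freeBi_lact r (a : monring B K) (u : 'rV[KBtKB]_r) : 'rV[KBtKB]_r :=
  map_mx (KBtKB_lact a) u.
Definition freeBi_ract r (u : 'rV[KBtKB]_r) (a : monring B K) : 'rV[KBtKB]_r :=
  map_mx (KBtKB_ract ^~ a) u.

Definition augBi_lact (a : monring B K) (k : K) : K := aug a * k.
Definition augBi_ract (k : K) (a : monring B K) : K := k * aug a.

Definition bimod_hom (M N : zmodType)
    (lM : monring B K -> M -> M) (rM : M -> monring B K -> M)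
    (lN : monring B K -> N -> N) (rN : N -> monring B K -> N)
    (f : {additive M -> N}) : Prop :=
  (forall a m, f (lM a m) = lN a (f m)) /\ (forall m a, f (rM m a) = rN (f m) a).

Definition weak_biFPn (n : nat) : Prop :=
  exists (r : nat -> nat) (d0 : {additive 'rV[KBtKB]_(r 0%N) -> K})
         (d : forall i : nat, {additive 'rV[KBtKB]_(r i.+1) -> 'rV[KBtKB]_(r i)}),
    [/\ bimod_hom (@freeBi_lact (r 0%N)) (@freeBi_ract (r 0%N))
                  augBi_lact augBi_ract d0,
        forall i : nat, bimod_hom (@freeBi_lact (r i.+1)) (@freeBi_ract (r i.+1))
                  (@freeBi_lact (r i)) (@freeBi_ract (r i)) (d i)
      & @exact_resolution K (fun i => 'rV[KBtKB]_(r i) : zmodType)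
                  d0 (fun i => d i) n].

End Bimodules.

(* A weak bi-FP_n resolution F_* -> K by free (KB,KB)-bimodules is in particular
   an exact complex of left KB-modules, but its terms F_k = (KB (x) KB)^(r k)
   are not finitely generated. Collapsing the right tensor factor by the
   augmentation maps F_k onto the free module KB^(r k); since the differentials
   commute with the right action of B, which the collapse forgets, they descend
   to matrices W_k, and the augmentation F_0 -> K factors through KB^(r 0).
   An exact complex that surjects in this way onto finitely generated free
   modules already has a finite free resolution: P_k = KB^(r 0 + ... + r k),
   built stage by stage with a chain map P_* -> F_*, where the new summand
   KB^(r k) carries W and the old summand P_(k-1) corrects the failure of the
   collapsed complex to be exact. Right FP_n is the mirror image, collapsing the
   left factor. *)

From HB Require Import structures.
From mathcomp Require Import all_boot all_algebra.
From mathcomp Require Import finmap monalg.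
From Stdlib Require Import ClassicalEpsilon.

Set Implicit Arguments.
Unset Strict Implicit.
Unset Printing Implicit Defensive.
Import GRing.Theory.
Local Open Scope ring_scope.

Definition linear_on (R : pzRingType) (U V : lmodType R) (f : U -> V)
    (f_lin : linear f) : {linear U -> V} :=
  HB.pack_for {linear U -> V} f (GRing.isLinear.Build R U V *:%R f f_lin).

Section Combination.
Variables (R : pzRingType) (V : lmodType R) (m : nat) (v : 'I_m -> V).

Definition comb (x : 'rV[R]_m) : V := \sum_i x 0 i *: v i.

Lemma comb_is_linear : linear comb.
Proof.
move=> a x y; rewrite /comb scaler_sumr -big_split /=; apply: eq_bigr => i _.
by rewrite !mxE scalerDl scalerA.
Qed.

HB.instance Definition _ := GRing.isLinear.Build R 'rV[R]_m V *:%R comb comb_is_linear.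

Lemma comb_delta i : comb (delta_mx 0 i) = v i.
Proof.
rewrite /comb (bigD1 i) //= big1 ?addr0 => [|j ji]; first by rewrite mxE !eqxx scale1r.
by rewrite mxE (negbTE ji) andbF scale0r.
Qed.

Lemma comb_mul l (x : 'rV[R]_l) (A : 'M[R]_(l, m)) :
  comb (x *m A) = \sum_i x 0 i *: comb (row i A).
Proof. by rewrite mulmx_sum_row linear_sum; apply: eq_bigr => i _; rewrite linearZ. Qed.

End Combination.

Section ResolutionFromFreeQuotients.
Variables (R : pzRingType) (M : lmodType R) (n : nat) (C : nat -> lmodType R).
Variables (d0 : {linear C 0%N -> M}) (d : forall i, {linear C i.+1 -> C i}).
Hypothesis exactC : @exact_resolution M (fun i => C i : zmodType) d0 (fun i => d i) n.
Variables (r : nat -> nat) (q : forall k, {linear C k -> 'rV[R]_(r k)}).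
Hypothesis q_onto : forall k v, exists u, q k u = v.
Variables (eps : {linear 'rV[R]_(r 0%N) -> M}) (W : forall k, 'M[R]_(r k.+1, r k)).
Hypothesis eps_q : forall u, eps (q 0%N u) = d0 u.
Hypothesis q_d : forall k u, q k (d k u) = q k.+1 u *m W k.

Lemma d0_onto x : exists u, d0 u = x.
Proof. by case: exactC. Qed.

Lemma ker_d0 : (0 < n)%N -> forall u, d0 u = 0 <-> exists v, d 0%N v = u.
Proof. by case: exactC. Qed.

Lemma ker_d i : (i.+1 < n)%N -> forall u, d i u = 0 <-> exists v, d i.+1 v = u.
Proof. by case: exactC => _ _ /(_ i). Qed.

Lemma mulWW k : (k.+2 <= n)%N -> W k.+1 *m W k = 0.
Proof.
move=> lt_k2n; apply/row_matrixP => i; rewrite row0 row_mul rowE.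
have [u <-] := q_onto (delta_mx 0 i).
by rewrite -!q_d (ker_d lt_k2n _).2 ?linear0 //; exists u.
Qed.

Lemma eps_mulW v : (0 < n)%N -> eps (v *m W 0%N) = 0.
Proof.
move=> n_gt0; have [u <-] := q_onto v.
by rewrite -q_d eps_q (ker_d0 n_gt0 _).2 //; exists u.
Qed.

(* The free resolution has [P_0 = R^(r 0)] and [P_(k+1) = P_k (+) R^(r (k+1))]. *)
Fixpoint rk k : nat := if k is k'.+1 then (rk k' + r k'.+1)%N else r 0%N.

Definition inr_rk k : 'M[R]_(r k, rk k) :=
  if k is k'.+1 then row_mx 0 1%:M else 1%:M.

Definition inl_rk k : 'M[R]_(rk k, rk k.+1) := row_mx 1%:M 0.
Arguments inr_rk : clear implicits.
Arguments inl_rk : clear implicits.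

Definition qmx k (g : 'I_(rk k) -> C k) : 'M[R]_(rk k, r k) := \matrix_i q k (g i).

(* On the summand [P_k] of [P_(k+1)] the differential is the identity minus the
   part that [W k] produces on the new summand, minus a correction [T] that
   makes consecutive differentials compose to zero. *)
Definition next_diff k (g : 'I_(rk k) -> C k) (T : 'M[R]_(rk k)) :
    'M[R]_(rk k.+1, rk k) :=
  col_mx (1%:M - qmx g *m inr_rk k - T) (W k *m inr_rk k).

Definition lift0 (i : 'I_(rk 0)) : C 0%N :=
  epsilon (inhabits 0) (fun u => d0 u = eps (delta_mx 0 i)).

Definition lift_next k g T (i : 'I_(rk k.+1)) : C k.+1 :=
  epsilon (inhabits 0) (fun u => d k u = comb g (row i (next_diff g T))).

Lemma lift0P i : d0 (lift0 i) = eps (delta_mx 0 i).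
Proof. exact: (epsilon_spec _ (fun u => d0 u = _) (d0_onto _)). Qed.

Lemma lift_nextP k g T i :
  (exists u, d k u = comb g (row i (next_diff g T))) ->
  d k (lift_next g T i) = comb g (row i (next_diff g T)).
Proof. exact: (epsilon_spec _ (fun u => d k u = _)). Qed.

(* [gens k] is the image of the standard basis of [P_k] under the chain map
   [P_* -> C_*]. The lifts are chosen by [epsilon], which returns junk when no
   preimage exists; [chain_diff_diff] shows that preimages do exist below [n]. *)
Fixpoint stage k : ('I_(rk k) -> C k) * 'M[R]_(rk k) :=
  if k is k'.+1 then
    let s := stage k' in (lift_next s.1 s.2, next_diff s.1 s.2 *m inl_rk k')
  else (lift0, 0).

Definition gens k := (stage k).1.
Definition corr k := (stage k).2.
Arguments gens : clear implicits.
Arguments corr : clear implicits.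
Definition diff k := next_diff (gens k) (corr k).

Lemma corr0 : corr 0%N = 0. Proof. by []. Qed.
Lemma corrS k : corr k.+1 = diff k *m inl_rk k. Proof. by []. Qed.
Lemma gensS k : gens k.+1 = lift_next (gens k) (corr k). Proof. by []. Qed.

Lemma q_comb k (g : 'I_(rk k) -> C k) x : q k (comb g x) = x *m qmx g.
Proof.
rewrite linear_sum mulmx_sum_row; apply: eq_bigr => i _.
by rewrite linearZ rowK.
Qed.

Lemma d0_comb x : d0 (comb (gens 0%N) x) = eps x.
Proof.
rewrite linear_sum [in RHS](row_sum_delta x) linear_sum; apply: eq_bigr => i _.
by rewrite !linearZ lift0P.
Qed.

Lemma eps_mul_qmx x : eps (x *m qmx (gens 0%N)) = eps x.
Proof. by rewrite -q_comb eps_q d0_comb. Qed.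

Lemma inr_diff k : inr_rk k.+1 *m diff k = W k *m inr_rk k.
Proof. by rewrite /diff /next_diff mul_row_col mul0mx add0r mul1mx. Qed.

Lemma inl_diff k : inl_rk k *m diff k = 1%:M - qmx (gens k) *m inr_rk k - corr k.
Proof. by rewrite /diff /next_diff mul_row_col mul0mx addr0 mul1mx. Qed.

Lemma eps_mul_diff x : (0 < n)%N -> eps (x *m diff 0%N) = 0.
Proof.
move=> n_gt0; rewrite /diff /next_diff -[x]hsubmxK mul_row_col !linearD /=.
rewrite /inr_rk !mulmx1 corr0 subr0 mulmxBr mulmx1 linearB /=.
by rewrite eps_mul_qmx subrr add0r eps_mulW.
Qed.

Definition chain k := forall x, d k (comb (gens k.+1) x) = comb (gens k) (x *m diff k).

Lemma chain_of_lifts k :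
  (forall i, exists u, d k u = comb (gens k) (row i (diff k))) -> chain k.
Proof.
move=> lifts x; rewrite comb_mul {1}/comb linear_sum; apply: eq_bigr => i _.
by rewrite linearZ gensS lift_nextP.
Qed.

Lemma qmx_chain k : chain k -> qmx (gens k.+1) *m W k = diff k *m qmx (gens k).
Proof.
move=> chain_k; apply/row_matrixP => i; rewrite !row_mul rowK -q_d.
by rewrite -[gens k.+1 i](comb_delta (gens k.+1)) chain_k -q_comb rowE.
Qed.

Lemma diff_diff_step k : (k.+2 <= n)%N -> chain k ->
  diff k *m corr k = 0 -> diff k.+1 *m diff k = 0.
Proof.
move=> lt_k2n chain_k DT0; rewrite {1}/diff /next_diff mul_col_mx.
rewrite -mulmxA inr_diff mulmxA mulWW // mul0mx.
rewrite corrS !mulmxBl mul1mx -!mulmxA inr_diff inl_diff !mulmxA qmx_chain //.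
by rewrite -mulmxA !mulmxBr mulmx1 !mulmxA opprB addrC subrK DT0 col_mx0.
Qed.

Lemma chain_diff_diff k :
  ((k < n)%N -> chain k) /\ ((k.+1 < n)%N -> diff k.+1 *m diff k = 0).
Proof.
elim: k => [|k [IHc IHd]].
  have chain0 : (0 < n)%N -> chain 0%N.
    move=> n_gt0; apply: chain_of_lifts => i; apply: (ker_d0 n_gt0 _).1.
    by rewrite d0_comb rowE eps_mul_diff.
  split=> // lt_1n; apply: diff_diff_step => //; first exact/chain0/ltnW.
  by rewrite corr0 mulmx0.
have chainS : (k.+1 < n)%N -> chain k.+1.
  move=> lt_k1n; apply: chain_of_lifts => i; apply: (ker_d lt_k1n _).1.
  by rewrite IHc ?(ltn_trans _ lt_k1n) // rowE -mulmxA IHd // mulmx0 linear0.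
split=> // lt_k2n; apply: diff_diff_step => //; first exact/chainS/ltnW.
by rewrite corrS mulmxA IHd ?mul0mx // ltnW.
Qed.

Lemma ker_eps x : (0 < n)%N -> eps x = 0 -> exists y, y *m diff 0%N = x.
Proof.
move=> n_gt0 x0; have /(ker_d0 n_gt0 _).1 [u du] : d0 (comb (gens 0%N) x) = 0.
  by rewrite d0_comb.
exists (row_mx x (q 1%N u)).
rewrite /diff /next_diff mul_row_col mulmxA -q_d du q_comb corr0 /inr_rk.
by rewrite !mulmx1 subr0 mulmxBr mulmx1 subrK.
Qed.

Lemma ker_diff i (x : 'rV[R]_(rk i.+1)) :
  (i.+1 < n)%N -> x *m diff i = 0 -> exists y, y *m diff i.+1 = x.
Proof.
move=> lt_i1n x0; have /(ker_d lt_i1n _).1 [u du] : d i (comb (gens i.+1) x) = 0.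
  by rewrite (chain_diff_diff i).1 ?x0 ?linear0 // ltnW.
exists (row_mx x (q i.+2 u)).
rewrite /diff /next_diff mul_row_col mulmxA -q_d du q_comb corrS.
by rewrite !mulmxBr mulmx1 !mulmxA x0 mul0mx subr0 subrK.
Qed.

Lemma FPn_of_free_quotients : FPn M n.
Proof.
exists rk, eps, (fun i => mulmxr (diff i)); split=> /=.
- by move=> x; have [u <-] := d0_onto x; exists (q 0%N u).
- by move=> n_gt0 x; split=> [/(ker_eps n_gt0)|[y <-]]; last exact: eps_mul_diff.
- move=> i lt_i1n x; split=> [/(ker_diff lt_i1n)|[y <-]] //.
  by rewrite -mulmxA (chain_diff_diff i).2 // mulmx0.
Qed.

End ResolutionFromFreeQuotients.

Section FreeQuotientsFromGenerators.
Variables (R : pzRingType) (M : lmodType R) (n : nat) (C : nat -> lmodType R).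
Variables (d0 : {linear C 0%N -> M}) (d : forall i, {linear C i.+1 -> C i}).
Hypothesis exactC : @exact_resolution M (fun i => C i : zmodType) d0 (fun i => d i) n.
Variables (r : nat -> nat) (q : forall k, {linear C k -> 'rV[R]_(r k)}).
Hypothesis q_onto : forall k v, exists u, q k u = v.
Variables (e : forall k, 'I_(r k) -> C k) (I : Type) (tw : forall k, I -> C k -> C k).
Arguments e : clear implicits.
Arguments tw : clear implicits.
Hypothesis q_e : forall k i, q k (e k i) = delta_mx 0 i.
Hypothesis q_tw : forall k b u, q k (tw k b u) = q k u.
Hypothesis d0_tw : forall b u, d0 (tw 0%N b u) = d0 u.
Hypothesis d_tw : forall k b u, d k (tw k.+1 b u) = tw k b (d k u).
(* For the free bimodule, [e k] is its standard basis, [tw k b] is right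
   multiplication by [b], and [q k] collapses the right tensor factor. *)
Hypothesis gen_ind : forall k (P : C k -> Prop),
  P 0 -> (forall u v, P u -> P v -> P (u + v)) ->
  (forall b s i, P (tw k b (s *: e k i))) -> forall u, P u.

Local Notation eps_gen := (comb (fun i => d0 (e 0%N i))).
Definition W_gen k : 'M[R]_(r k.+1, r k) := \matrix_i q k (d k (e k.+1 i)).

Lemma eps_gen_q u : eps_gen (q 0%N u) = d0 u.
Proof.
elim/gen_ind: u => [|u v IHu IHv|b s i]; first by rewrite !linear0.
  by rewrite !linearD /= IHu IHv.
by rewrite q_tw d0_tw !linearZ /= q_e comb_delta.
Qed.

Lemma q_d_gen k u : q k (d k u) = q k.+1 u *m W_gen k.
Proof.
elim/gen_ind: u => [|u v IHu IHv|b s i]; first by rewrite !linear0 mul0mx.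
  by rewrite !linearD /= IHu IHv mulmxDl.
by rewrite d_tw !q_tw !linearZ /= q_e -scalemxAl -rowE rowK.
Qed.

Lemma FPn_of_generators : FPn M n.
Proof. exact: (FPn_of_free_quotients exactC q_onto eps_gen_q q_d_gen). Qed.

End FreeQuotientsFromGenerators.

Lemma addmorph0 (V W : zmodType) (F : V -> W) : {morph F : x y / x + y} -> F 0 = 0.
Proof. by move=> FD; apply/(@addrI _ (F 0)); rewrite -FD !addr0. Qed.

Section MalgInduction.
Variables (X : choiceType) (G : zmodType).

Lemma malg_ind (P : malg X G -> Prop) :
  P 0 -> (forall u v, P u -> P v -> P (u + v)) -> (forall c k, P << c *g k >>) ->
  forall u, P u.
Proof.
move=> P0 PD PU u.
suff Psum s : P (\sum_(k <- s) << u@_k *g k >>) by rewrite [u]monalgE; apply: Psum.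
by elim: s => [|k s IH]; rewrite ?big_nil ?big_cons //; apply: PD.
Qed.

Lemma malg_morph_eq (V : zmodType) (F F' : malg X G -> V) :
  {morph F : x y / x + y} -> {morph F' : x y / x + y} ->
  (forall c k, F << c *g k >> = F' << c *g k >>) -> F =1 F'.
Proof.
move=> FD F'D FF'; elim/malg_ind => [|u v Fu Fv|//].
  by rewrite (addmorph0 FD) (addmorph0 F'D).
by rewrite FD F'D Fu Fv.
Qed.

Definition single_row r (i : 'I_r) (x : malg X G) : 'rV[malg X G]_r :=
  \row_j (x *+ (j == i)).

Lemma single_rowD r (i : 'I_r) : {morph single_row i : x y / x + y}.
Proof. by move=> x y; apply/rowP => j; rewrite !mxE mulrnDl. Qed.

Lemma single_row0 r (i : 'I_r) : single_row i 0 = 0.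
Proof. exact: addmorph0 (@single_rowD r i). Qed.

Lemma row_malg_ind r (P : 'rV[malg X G]_r -> Prop) :
  P 0 -> (forall u v, P u -> P v -> P (u + v)) ->
  (forall i c k, P (single_row i << c *g k >>)) -> forall u, P u.
Proof.
move=> P0 PD PU u.
have -> : u = \sum_i single_row i (u 0 i).
  apply/rowP => j; rewrite summxE (bigD1 j) //= big1 => [|i ij]; last first.
    by rewrite mxE eq_sym (negbTE ij).
  by rewrite mxE eqxx addr0.
apply: (big_ind P) => // i _; elim/malg_ind: (u 0 i) => [|x y Px Py|//].
  by rewrite single_row0.
by rewrite single_rowD; apply: PD.
Qed.

End MalgInduction.

Section MalgSum.
Variables (K : comPzRingType) (X : choiceType) (Y : zmodType) (h : X -> K -> Y).
Hypothesis h0 : forall p, h p 0 = 0.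
Hypothesis hD : forall p x y, h p (x + y) = h p x + h p y.

Definition msum (u : malg X K) : Y := \sum_(p <- msupp u) h p u@_p.

Lemma msumEw u (dom : {fset X}) :
  (msupp u `<=` dom)%fset -> msum u = \sum_(p <- dom) h p u@_p.
Proof. by move=> le; rewrite /msum (big_fset_incl _ le) // => k _ /mcoeff_outdom ->. Qed.

Lemma msumD : {morph msum : u v / u + v}.
Proof.
move=> u v; rewrite (msumEw (msuppD_le _ _)) (msumEw (fsubsetUl _ (msupp v))).
rewrite (msumEw (fsubsetUr (msupp u) _)) -big_split /=.
by apply/eq_bigr => k _; rewrite mcoeffD hD.
Qed.

Lemma msumU c k : msum << c *g k >> = h k c.
Proof. by rewrite (msumEw msuppU_le) big_seq_fset1 mcoeffUU. Qed.

End MalgSum.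

Section FreeBimodule.
Variables (B : monoidType) (K : comPzRingType).
Local Notation KB := (monring B K).
Local Notation T := (KBtKB B K).
Local Notation lact := (@KBtKB_lact B K).
Local Notation ract := (@KBtKB_ract B K).
Implicit Types (a b : KB) (u v : T) (c : K).

Lemma lactE a u : lact a u =
  msum (fun x ax => msum (fun p up => << ax * up *g ((x * p.1)%g, p.2) >>) u) a.
Proof. by []. Qed.

Lemma ractE u a : ract u a =
  msum (fun p up => msum (fun x ax => << up * ax *g (p.1, (p.2 * x)%g) >>) a) u.
Proof. by []. Qed.

Lemma lactDl u : {morph lact^~ u : a b / a + b}.
Proof.
move=> a b; rewrite !lactE msumD // => [x|x y z].
  by rewrite /msum big1 // => p _; rewrite mul0r monalgU0.
by rewrite /msum -big_split /=; apply: eq_bigr => p _; rewrite mulrDl monalgUD.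
Qed.

Lemma lactDr a : {morph lact a : u v / u + v}.
Proof.
move=> u v; rewrite !lactE -big_split /=; apply: eq_bigr => x _.
by rewrite msumD // => [p|p y z]; rewrite ?mulr0 ?monalgU0 ?mulrDr ?monalgUD.
Qed.

Lemma ractDl a : {morph ract^~ a : u v / u + v}.
Proof.
move=> u v; rewrite !ractE msumD // => [p|p y z].
  by rewrite /msum big1 // => x _; rewrite mul0r monalgU0.
by rewrite /msum -big_split /=; apply: eq_bigr => x _; rewrite mulrDl monalgUD.
Qed.

Lemma ractDr u : {morph ract u : a b / a + b}.
Proof.
move=> a b; rewrite !ractE -big_split /=; apply: eq_bigr => p _.
by rewrite msumD // => [x|x y z]; rewrite ?mulr0 ?monalgU0 ?mulrDr ?monalgUD.
Qed.

Lemma lactUU c x c' p :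
  lact << c *g x >> << c' *g p >> = << c * c' *g ((x * p.1)%g, p.2) >>.
Proof.
rewrite lactE msumU ?msumU // => [*|y]; first by rewrite mulr0 monalgU0.
by rewrite /msum big1 // => *; rewrite mul0r monalgU0.
Qed.

Lemma ractUU c p c' y :
  ract << c *g p >> << c' *g y >> = << c * c' *g (p.1, (p.2 * y)%g) >>.
Proof.
rewrite ractE msumU ?msumU // => [*|x]; first by rewrite mulr0 monalgU0.
by rewrite /msum big1 // => *; rewrite mul0r monalgU0.
Qed.

Lemma monringUU c1 c2 (x1 x2 : B) :
  (<< c1 *g x1 >> : KB) * << c2 *g x2 >> = << c1 * c2 *g (x1 * x2)%g >>.
Proof. exact: mrmulUU. Qed.

Lemma lactA a b u : lact a (lact b u) = lact (a * b) u.
Proof.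
move: a; apply: malg_morph_eq => [x y|x y|c x]; rewrite ?mulrDl ?lactDl //.
move: b; apply: malg_morph_eq => [y z|y z|c' y]; rewrite ?mulrDr ?lactDl ?lactDr //.
move: u; apply: malg_morph_eq => [z w|z w|c'' p]; rewrite ?lactDr //.
by rewrite !lactUU monringUU lactUU mulrA mulgA.
Qed.

Lemma lact1 u : lact 1 u = u.
Proof.
move: u; apply: malg_morph_eq => [u v|//|c p]; first exact: lactDr.
by rewrite [1]/GRing.one /= /mrone lactUU mul1r mul1g -surjective_pairing.
Qed.

Lemma ractA u a b : ract (ract u a) b = ract u (a * b).
Proof.
move: b; apply: malg_morph_eq => [x y|x y|c x]; rewrite ?mulrDr ?ractDr //.
move: a; apply: malg_morph_eq => [y z|y z|c' y]; rewrite ?mulrDl ?ractDr ?ractDl //.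
move: u; apply: malg_morph_eq => [z w|z w|c'' p]; rewrite ?ractDl //.
by rewrite !ractUU monringUU ractUU mulrA mulgA.
Qed.

Lemma ract1 u : ract u 1 = u.
Proof.
move: u; apply: malg_morph_eq => [u v|//|c p]; first exact: ractDl.
by rewrite [1]/GRing.one /= /mrone ractUU mulr1 mulg1 -surjective_pairing.
Qed.

End FreeBimodule.

Section Collapse.
Variables (B : monoidType) (K : comPzRingType).
Local Notation KB := (monring B K).
Local Notation T := (KBtKB B K).
Local Notation lact := (@KBtKB_lact B K).
Local Notation ract := (@KBtKB_ract B K).
Implicit Types (a : KB) (u : T) (c : K).

Definition collapse_r u : KB := msum (fun p c => << c *g p.1 >>) u.
Definition collapse_l u : KB := msum (fun p c => << c *g p.2 >>) u.
Definition tensor1r (x : KB) : T := msum (fun y c => << c *g (y, 1%g) >>) x.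
Definition tensor1l (x : KB) : T := msum (fun y c => << c *g (1%g, y) >>) x.

Lemma collapse_rD : {morph collapse_r : u v / u + v}.
Proof. by apply: msumD => *; rewrite ?monalgU0 ?monalgUD. Qed.

Lemma collapse_lD : {morph collapse_l : u v / u + v}.
Proof. by apply: msumD => *; rewrite ?monalgU0 ?monalgUD. Qed.

Lemma collapse_rU c p : collapse_r << c *g p >> = << c *g p.1 >>.
Proof. by rewrite /collapse_r msumU // => *; rewrite monalgU0. Qed.

Lemma collapse_lU c p : collapse_l << c *g p >> = << c *g p.2 >>.
Proof. by rewrite /collapse_l msumU // => *; rewrite monalgU0. Qed.

Lemma collapse_r_lact a u : collapse_r (lact a u) = a * collapse_r u.
Proof.
move: a; apply: malg_morph_eq => [x y|x y|c x]; rewrite ?lactDl ?collapse_rD ?mulrDl //.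
move: u; apply: malg_morph_eq => [y z|y z|c' p].
- by rewrite lactDr collapse_rD.
- by rewrite collapse_rD mulrDr.
by rewrite lactUU !collapse_rU monringUU.
Qed.

Lemma collapse_l_ract u a : collapse_l (ract u a) = collapse_l u * a.
Proof.
move: a; apply: malg_morph_eq => [x y|x y|c x]; rewrite ?ractDr ?collapse_lD ?mulrDr //.
move: u; apply: malg_morph_eq => [y z|y z|c' p].
- by rewrite ractDl collapse_lD.
- by rewrite collapse_lD mulrDl.
by rewrite ractUU !collapse_lU monringUU.
Qed.

Lemma collapse_r_ractU u (y : B) : collapse_r (ract u << 1 *g y >>) = collapse_r u.
Proof.
move: u; apply: malg_morph_eq => [u v|u v|c p]; rewrite ?ractDl ?collapse_rD //.
by rewrite ractUU !collapse_rU mulr1.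
Qed.

Lemma collapse_l_lactU (y : B) u : collapse_l (lact << 1 *g y >> u) = collapse_l u.
Proof.
move: u; apply: malg_morph_eq => [u v|u v|c p]; rewrite ?lactDr ?collapse_lD //.
by rewrite lactUU !collapse_lU mul1r.
Qed.

Lemma tensor1rK : cancel tensor1r collapse_r.
Proof.
apply: malg_morph_eq => [x y|//|c y]; last first.
  by rewrite /tensor1r msumU ?collapse_rU // => *; rewrite monalgU0.
by rewrite /tensor1r msumD ?collapse_rD // => *; rewrite ?monalgU0 ?monalgUD.
Qed.

Lemma tensor1lK : cancel tensor1l collapse_l.
Proof.
apply: malg_morph_eq => [x y|//|c y]; last first.
  by rewrite /tensor1l msumU ?collapse_lU // => *; rewrite monalgU0.
by rewrite /tensor1l msumD ?collapse_lD // => *; rewrite ?monalgU0 ?monalgUD.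
Qed.

End Collapse.

Definition bimodL (B : monoidType) (K : comPzRingType) (r : nat) : Type :=
  'rV[KBtKB B K]_r.
Definition bimodR (B : monoidType) (K : comPzRingType) (r : nat) : Type :=
  'rV[KBtKB B K]_r.

Section FreeBimoduleRows.
Variables (B : monoidType) (K : comPzRingType) (r : nat).
Local Notation KB := (monring B K).
Local Notation T := (KBtKB B K).
Implicit Types (a : KB) (u v : 'rV[T]_r).

HB.instance Definition _ := GRing.Zmodule.on (bimodL B K r).
HB.instance Definition _ := GRing.Zmodule.on (bimodR B K r).

Lemma freeBi_lactA a b u :
  freeBi_lact a (freeBi_lact b u) = freeBi_lact (a * b) u.
Proof. by apply/rowP => j; rewrite !mxE lactA. Qed.

Lemma freeBi_lact1 u : freeBi_lact 1 u = u.
Proof. by apply/rowP => j; rewrite !mxE lact1. Qed.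

Lemma freeBi_lactDl u : {morph (@freeBi_lact B K r)^~ u : a b / a + b}.
Proof. by move=> a b; apply/rowP => j; rewrite !mxE lactDl. Qed.

Lemma freeBi_lactDr a : {morph @freeBi_lact B K r a : u v / u + v}.
Proof. by move=> u v; apply/rowP => j; rewrite !mxE lactDr. Qed.

Lemma freeBi_ractA u a b :
  freeBi_ract (freeBi_ract u a) b = freeBi_ract u (a * b).
Proof. by apply/rowP => j; rewrite !mxE ractA. Qed.

Lemma freeBi_ract1 u : freeBi_ract u 1 = u.
Proof. by apply/rowP => j; rewrite !mxE ract1. Qed.

Lemma freeBi_ractDl a : {morph (@freeBi_ract B K r)^~ a : u v / u + v}.
Proof. by move=> u v; apply/rowP => j; rewrite !mxE ractDl. Qed.

Lemma freeBi_ractDr u : {morph @freeBi_ract B K r u : a b / a + b}.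
Proof. by move=> a b; apply/rowP => j; rewrite !mxE ractDr. Qed.

HB.instance Definition _ := GRing.Zmodule_isLmodule.Build KB (bimodL B K r)
  freeBi_lactA freeBi_lact1 freeBi_lactDr freeBi_lactDl.

HB.instance Definition _ :=
  GRing.Zmodule_isLmodule.Build KB^c (bimodR B K r)
  (fun a b u => freeBi_ractA u b a) freeBi_ract1 freeBi_ractDl freeBi_ractDr.

End FreeBimoduleRows.

Section CollapseRows.
Variables (B : monoidType) (K : comPzRingType).
Local Notation KB := (monring B K).
Local Notation T := (KBtKB B K).
Implicit Types (c : K) (p : B * B).

Definition bibasis r (i : 'I_r) : 'rV[T]_r := single_row i << 1 *g (1%g, 1%g) >>.

Lemma lact0r (a : KB) : KBtKB_lact a 0 = 0.
Proof. exact: addmorph0 (lactDr a). Qed.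

Lemma ract0l (a : KB) : KBtKB_ract 0 a = 0.
Proof. exact: addmorph0 (ractDl a). Qed.

Lemma single_rowUE_l r (i : 'I_r) c p : single_row i << c *g p >> =
  freeBi_ract (freeBi_lact << c *g p.1 >> (bibasis i)) << 1 *g p.2 >>.
Proof.
apply/rowP => j; rewrite !mxE; case: (j == i); last by rewrite lact0r ract0l.
by rewrite lactUU ractUU /= !mulr1 mulg1 mul1g -surjective_pairing.
Qed.

Lemma single_rowUE_r r (i : 'I_r) c p : single_row i << c *g p >> =
  freeBi_lact << 1 *g p.1 >> (freeBi_ract (bibasis i) << c *g p.2 >>).
Proof.
apply/rowP => j; rewrite !mxE; case: (j == i); last by rewrite ract0l lact0r.
by rewrite ractUU lactUU /= !mul1r mulg1 mul1g -surjective_pairing.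
Qed.

Definition collapse_rowL r (u : bimodL B K r) : 'rV[KB]_r := map_mx (@collapse_r B K) u.
Definition collapse_rowR r (u : bimodR B K r) : 'rV[KB^c]_r := map_mx (@collapse_l B K) u.

Lemma collapse_rowL_is_linear r : linear (@collapse_rowL r).
Proof. by move=> a u v; apply/rowP => j; rewrite !mxE collapse_rD collapse_r_lact. Qed.

Lemma collapse_rowR_is_linear r : linear (@collapse_rowR r).
Proof. by move=> a u v; apply/rowP => j; rewrite !mxE collapse_lD collapse_l_ract. Qed.

HB.instance Definition _ r := GRing.isLinear.Build KB (bimodL B K r) 'rV[KB]_r *:%R
  (@collapse_rowL r) (@collapse_rowL_is_linear r).
HB.instance Definition _ r := GRing.isLinear.Build KB^c (bimodR B K r) 'rV[KB^c]_r *:%R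
  (@collapse_rowR r) (@collapse_rowR_is_linear r).

Lemma collapse_rowL_onto r (v : 'rV[KB]_r) : exists u, collapse_rowL u = v.
Proof. by exists (map_mx (@tensor1r B K) v); apply/rowP => j; rewrite !mxE tensor1rK. Qed.

Lemma collapse_rowR_onto r (v : 'rV[KB^c]_r) : exists u, collapse_rowR u = v.
Proof. by exists (map_mx (@tensor1l B K) v); apply/rowP => j; rewrite !mxE tensor1lK. Qed.

Lemma collapse_rowL_bibasis r (i : 'I_r) : collapse_rowL (bibasis i) = delta_mx 0 i.
Proof.
apply/rowP => j; rewrite !mxE eqxx.
by case: (j == i); rewrite ?mulr1n ?mulr0n ?collapse_rU ?(addmorph0 (@collapse_rD B K)).
Qed.

Lemma collapse_rowR_bibasis r (i : 'I_r) : collapse_rowR (bibasis i) = delta_mx 0 i.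
Proof.
apply/rowP => j; rewrite !mxE eqxx.
by case: (j == i); rewrite ?mulr1n ?mulr0n ?collapse_lU ?(addmorph0 (@collapse_lD B K)).
Qed.

Lemma collapse_rowL_ractU r (u : bimodL B K r) (y : B) :
  collapse_rowL (freeBi_ract u << 1 *g y >>) = collapse_rowL u.
Proof. by apply/rowP => j; rewrite !mxE collapse_r_ractU. Qed.

Lemma collapse_rowR_lactU r (u : bimodR B K r) (y : B) :
  collapse_rowR (freeBi_lact << 1 *g y >> u) = collapse_rowR u.
Proof. by apply/rowP => j; rewrite !mxE collapse_l_lactU. Qed.

End CollapseRows.

Section WeakBiFPn.
Variables (B : monoidType) (K : comPzRingType) (n : nat).

Lemma weak_biFPn_left_FPn : weak_biFPn B K n -> left_FPn B K n.
Proof.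
case=> r [d0 [d [[d0l d0r] dhom exact_d]]].
have d0_lin : linear (d0 : bimodL B K (r 0%N) -> augL_ B K).
  by move=> a u v; rewrite raddfD /= d0l.
have d_lin i : linear (d i : bimodL B K (r i.+1) -> bimodL B K (r i)).
  by move=> a u v; rewrite raddfD /= (dhom i).1.
apply: (@FPn_of_generators _ _ n (fun k => bimodL B K (r k)) (linear_on d0_lin)
  (fun i => linear_on (d_lin i)) exact_d r (fun k => @collapse_rowL B K (r k)) _
  (fun k => @bibasis B K (r k)) B (fun k y u => freeBi_ract u << 1 *g y >>)).
- move=> k; exact: collapse_rowL_onto.
- move=> k; exact: collapse_rowL_bibasis.
- move=> k y u; exact: collapse_rowL_ractU.
- by move=> y u; rewrite /= d0r /augBi_ract augU mulr1.
- by move=> k y u; rewrite /= (dhom k).2.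
- move=> k P P0 PD Pgen; elim/row_malg_ind => // i c p.
  by rewrite single_rowUE_l; apply: Pgen.
Qed.

Lemma weak_biFPn_right_FPn : weak_biFPn B K n -> right_FPn B K n.
Proof.
case=> r [d0 [d [[d0l d0r] dhom exact_d]]].
have d0_lin : linear (d0 : bimodR B K (r 0%N) -> augR_ B K).
  by move=> a u v; rewrite raddfD /= d0r.
have d_lin i : linear (d i : bimodR B K (r i.+1) -> bimodR B K (r i)).
  by move=> a u v; rewrite raddfD /= (dhom i).2.
apply: (@FPn_of_generators _ _ n (fun k => bimodR B K (r k)) (linear_on d0_lin)
  (fun i => linear_on (d_lin i)) exact_d r (fun k => @collapse_rowR B K (r k)) _
  (fun k => @bibasis B K (r k)) B (fun k y u => freeBi_lact << 1 *g y >> u)).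
- move=> k; exact: collapse_rowR_onto.
- move=> k; exact: collapse_rowR_bibasis.
- move=> k y u; exact: collapse_rowR_lactU.
- by move=> y u; rewrite /= d0l /augBi_lact augU mul1r.
- by move=> k y u; rewrite /= (dhom k).1.
- move=> k P P0 PD Pgen; elim/row_malg_ind => // i c p.
  by rewrite single_rowUE_r; apply: Pgen.
Qed.

End WeakBiFPn.

Theorem theorem1 (K : comPzRingType) (B : monoidType) (n : nat) :
  weak_biFPn B K n -> left_FPn B K n /\ right_FPn B K n.
Proof.
by move=> biFPn; split; [exact: weak_biFPn_left_FPn | exact: weak_biFPn_right_FPn].
Qed.
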